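(* Let $r\geqslant 3$ be an odd integer and let $\Gamma\cong\mathbb{Z}_{2r}\oplus\mathbb{Z}_2\oplus\mathbb{Z}_4$. Then there exists an $\mathrm{MRS}_\Gamma(r,8;2)$ in which every row sum and every column sum equals $0_\Gamma$.
   Context: For an abelian group $\Gamma$ of order $abc$, an $\mathrm{MRS}_\Gamma(a,b;c)$ is a collection of $c$ arrays of size $a\times b$ whose entries are the elements of $\Gamma$, each appearing exactly once and in a unique array, such that there are $\omega,\delta\in\Gamma$ with every row sum (in every array) equal to $\omega$ and every column sum (in every array) equal to $\delta$. *)

From mathcomp Require Import all_boot all_order all_algebra.
Set Implicit Arguments. Unset Strict Implicit. Unset Printing Implicit Defensive.
Import GRing.Theory.
Local Open Scope ring_scope.

(* The abelian group Z_{2r} (+) Z_2 (+) Z_4, as a product of zmodTypes.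
   For r >= 1, 2r >= 2, so 'Z_(2r) really is Z/2rZ. *)
Notation Gam r :=
  (('Z_(2 * r) * 'Z_2 * 'Z_4)%type).

(* An MRS_G(a,b;c): c arrays of size a x b, A k i j being the entry in row i,
   column j of array k; every element of G occurs exactly once overall
   (A is a bijection from positions to G); all row sums equal omega and all
   column sums equal delta. *)
Definition is_MRS (G : zmodType) (a b c : nat)
    (A : 'I_c -> 'I_a -> 'I_b -> G) (omega delta : G) : Prop :=
  bijective (fun p : 'I_c * 'I_a * 'I_b => A p.1.1 p.1.2 p.2) /\
  (forall k i, \sum_(j < b) A k i j = omega) /\
  (forall k j, \sum_(i < a) A k i j = delta).

From HB Require Import structures.
From mathcomp Require Import all_boot all_order all_algebra zify.
Set Implicit Arguments. Unset Strict Implicit. Unset Printing Implicit Defensive.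
Import GRing.Theory.
Local Open Scope ring_scope.

(* As r is odd, Z_2r = Z_r (+) Z_2, so Gamma = Z_r (+) K with K = Z_2 (+) Z_2 (+) Z_4
   of order 16 = 2 * 8.  Put the element (z, x) of Z_r (+) K in the array cell
   (k, i, j) where z = i on the left half (j < 4) and z = -i on the right half, and
   x = B_z(k, j) for a bijective 2 x 8 block B_z with values in K.  The Z_r-parts
   of a row cancel (4i - 4i), those of a column add up to the sum of Z_r, which is
   0 for r odd.  The K-parts need: the B_z(k, j) sum to 0 over z, and the left half
   of a row of B_z cancels the right half of the same row of B_(-z).  Take three
   explicit blocks for z = 0, 1, -1 with vanishing cellwise sum, and +-E elsewhere,
   with E an enumeration of K whose half rows have equal sums and the sign given by
   the parity of z: for r odd, z and -z have opposite parities, and the signs over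
   z = 2, ..., r - 2 cancel in pairs. *)

Lemma is_MRS_morph (G H : zmodType) (f : G -> H) (a b c : nat)
    (A : 'I_c -> 'I_a -> 'I_b -> G) (omega delta : G) :
  {morph f : x y / x + y} -> f 0 = 0 -> bijective f -> is_MRS A omega delta ->
  is_MRS (fun k i j => f (A k i j)) (f omega) (f delta).
Proof.
move=> fD f0 f_bij [A_bij [rowA colA]].
split; [exact: bij_comp | split=> [k i | k j]].
  by rewrite -(big_morph f fD f0) rowA.
by rewrite -(big_morph f fD f0) colA.
Qed.

Lemma sum_pair (U V : zmodType) (I : Type) (s : seq I) (P : pred I) (F : I -> U * V) :
  \sum_(i <- s | P i) F i = (\sum_(i <- s | P i) (F i).1, \sum_(i <- s | P i) (F i).2).
Proof. by rewrite -!raddf_sum; case: (\sum_(i <- s | P i) F i). Qed.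

Section CyclicLift.
Variables (p c h : nat) (K : finZmodType).
Local Notation Z := 'I_p.+1.
Variable P : Z -> 'I_c -> 'I_(h + h) -> K.
Hypothesis P_inj : forall z, injective (fun x : 'I_c * 'I_(h + h) => P z x.1 x.2).
Hypothesis card_K : #|K| = (c * (h + h))%N.
Hypothesis sum_Z : \sum_(z : Z) z = 0.
Hypothesis sum_P : forall k j, \sum_(z : Z) P z k j = 0.
Hypothesis halves_P : forall z k,
  \sum_(j < h) P z k (lshift h j) + \sum_(j < h) P (- z) k (rshift h j) = 0.

Definition lift_coord (i : Z) (j : 'I_(h + h)) : Z := if (j < h)%N then i else - i.
Definition lift_array k i j : Z * K := (lift_coord i j, P (lift_coord i j) k j).

Lemma lift_coord_inj j : injective (lift_coord ^~ j).
Proof. by move=> i i'; rewrite /lift_coord; case: ifP => // _; apply: oppr_inj. Qed.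

Lemma sum_lift_coord (V : zmodType) (F : Z -> 'I_(h + h) -> V) i :
  \sum_(j < h + h) F (lift_coord i j) j =
  \sum_(j < h) F i (lshift h j) + \sum_(j < h) F (- i) (rshift h j).
Proof.
rewrite big_split_ord /lift_coord /=.
by congr (_ + _); apply: eq_bigr => j _; rewrite ?ltn_ord // ltnNge leq_addr.
Qed.

Lemma is_MRS_lift : is_MRS lift_array 0 0.
Proof.
split; [|split=> [k i | k j]].
- apply: inj_card_bij; last by rewrite !card_prod card_K !card_ord mulnCA mulnA.
  move=> [[k i] j] [[k' i'] j'] [eq_z]; rewrite -eq_z => /(@P_inj _ (k, j) (k', j')) [<- ej].
  by rewrite -ej in eq_z; rewrite (lift_coord_inj eq_z) ej.
- rewrite sum_pair (sum_lift_coord (fun z _ => z)) (sum_lift_coord (fun z j => P z k j)) /=.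
  by rewrite halves_P sumrN subrr.
- rewrite sum_pair /=.
  have := sum_Z; rewrite (reindex_inj (@lift_coord_inj j)) => /= ->.
  by have := sum_P k j; rewrite (reindex_inj (@lift_coord_inj j)) => /= ->.
Qed.

End CyclicLift.

Lemma sum_Zp_odd (p : nat) : odd p.+2 -> \sum_(z : 'I_p.+2) z = 0.
Proof.
move=> p_odd; rewrite (eq_bigr _ (fun z _ => esym (natr_Zp z))) -natr_sum.
rewrite -(big_mkord xpredT (fun i => i)) bin2_sum bin2odd // natrM.
have -> : p.+2%:R = 0 :> 'I_p.+2 by apply: val_inj; rewrite Zp_nat /= modnn.
by rewrite mul0r.
Qed.

Lemma sum_alternating (V : zmodType) (x : V) (a m : nat) :
  \sum_(a <= i < a + m.*2) (if odd i then x else - x) = 0.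
Proof.
elim: m => [|m IH]; first by rewrite addn0 big_geq.
rewrite doubleS !addnS !big_nat_recr ?leq_addr ?leqW ?leq_addr // IH /= add0r.
by case: odd; rewrite ?addrN ?addNr.
Qed.

Local Notation K := ('Z_2 * 'Z_2 * 'Z_4)%type.

Section OddCyclicSplitting.
Variable n : nat.
(* Written n.+2, the ordinal type 'I_r carries the ring structure of Z/rZ. *)
Local Notation r := n.+2.
Hypothesis r_odd : odd r.

Definition Zp_crt (x : 'I_r * 'Z_2) : 'Z_(2 * r) := (2 * x.1 + r * x.2)%:R.

Lemma Zp_crt0 : Zp_crt 0 = 0.
Proof. by rewrite /Zp_crt /= !muln0. Qed.

Lemma Zp_crtD : {morph Zp_crt : x y / x + y}.
Proof.
move=> [z b] [z' b']; rewrite /Zp_crt /= -natrD addnACA -!mulnDr.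
by rewrite !muln_modr (mulnC r 2) natrD !Zp_nat_mod // -natrD.
Qed.

Lemma Zp_crt_inj : injective Zp_crt.
Proof.
move=> [z b] [z' b'] /(congr1 val); rewrite /= !val_Zp_nat // => /eqP e.
have eq_b : b = b'.
  apply: val_inj; move: e => /eqP/(congr1 odd).
  have odd_crt (x y : nat) : odd (2 * x + r * y) = odd y.
    by rewrite oddD 2!oddM r_odd.
  rewrite !odd_mod ?oddM // !odd_crt.
  by case: b b' => [[|[|?]] ?] [[|[|?]] ?].
move: e; rewrite eq_b eqn_modDr !modn_small ?ltn_mul2l ?ltn_ord //.
by rewrite eqn_mul2l /= => /eqP/val_inj ->.
Qed.

Lemma Zp_crt_bij : bijective Zp_crt.
Proof.
apply: (inj_card_bij Zp_crt_inj).
have Z2r_card : (Zp_trunc (2 * r)).+2 = (2 * r)%N by apply: Zp_cast.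
by rewrite card_prod !card_ord Z2r_card mulnC.
Qed.

Definition Gam_of (x : 'I_r * K) : Gam r := (Zp_crt (x.1, x.2.1.1), x.2.1.2, x.2.2).

Lemma Gam_of0 : Gam_of 0 = 0.
Proof. exact: (congr1 (fun x => (x, 0, 0)) Zp_crt0). Qed.

Lemma Gam_ofD : {morph Gam_of : x y / x + y}.
Proof.
move=> [z [[b c] d]] [z' [[b' c'] d']].
by rewrite /Gam_of /=; congr (_, _, _); exact: (Zp_crtD (z, b) (z', b')).
Qed.

Lemma Gam_of_bij : bijective Gam_of.
Proof.
apply: inj_card_bij.
  by move=> [z [[b c] d]] [z' [[b' c'] d']] [/Zp_crt_inj [-> ->] -> ->].
have Z2r_card : (Zp_trunc (2 * r)).+2 = (2 * r)%N by apply: Zp_cast.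
by rewrite !card_prod !card_ord Z2r_card; lia.
Qed.

End OddCyclicSplitting.

Definition K_of_nat (x : nat) : K := ((x %/ 8)%:R, (x %/ 4)%:R, x%:R).
Definition table (s : seq nat) (k : 'I_2) (j : 'I_8) : K := nth 0 (map K_of_nat s) (8 * k + j).
Definition tab0 := table [:: 13; 7; 1; 12; 5; 8; 4; 14; 15; 3; 0; 11; 9; 2; 6; 10].
Definition tab1 := table [:: 8; 5; 10; 11; 6; 14; 0; 3; 15; 13; 9; 4; 1; 12; 7; 2].
Definition tabN1 := table [:: 7; 0; 9; 5; 1; 6; 4; 15; 2; 12; 11; 13; 10; 14; 3; 8].
Definition tab_id := table (iota 0 16).

Lemma table_inj s : size s = 16%N -> uniq (map K_of_nat s) ->
  injective (fun x : 'I_2 * 'I_8 => table s x.1 x.2).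
Proof.
move=> s16 s_uniq [k j] [k' j'] /= /eqP.
have lt16 (k0 : 'I_2) (j0 : 'I_8) : (8 * k0 + j0 < size (map K_of_nat s))%N.
  by rewrite size_map s16; move: (ltn_ord k0) (ltn_ord j0); lia.
rewrite /table nth_uniq ?lt16 // => /eqP kj.
by move: (ltn_ord j) (ltn_ord j') => j_lt j'_lt; congr (_, _); apply: ord_inj; lia.
Qed.

Lemma tables_sum k j : tab0 k j + tab1 k j + tabN1 k j = 0.
Proof.
apply/eqP; case: k j => [[|[|?]] ?] // [[|[|[|[|[|[|[|[|?]]]]]]]] ?] //.
all: by vm_compute.
Qed.

Lemma tables_halves k :
  [/\ \sum_(j < 4) tab0 k (lshift 4 j) + \sum_(j < 4) tab0 k (rshift 4 j) = 0,
      \sum_(j < 4) tab1 k (lshift 4 j) + \sum_(j < 4) tabN1 k (rshift 4 j) = 0,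
      \sum_(j < 4) tabN1 k (lshift 4 j) + \sum_(j < 4) tab1 k (rshift 4 j) = 0 &
      \sum_(j < 4) tab_id k (lshift 4 j) = \sum_(j < 4) tab_id k (rshift 4 j)].
Proof.
by split; apply/eqP; rewrite !big_ord_recl !big_ord0; case: k => [[|[|k]] k_lt] //; vm_compute.
Qed.

Section Blocks.
Variable n : nat.
Local Notation r := n.+2.
Hypothesis r_odd : odd r.
Hypothesis r_gt2 : (2 < r)%N.

Lemma val_Zp1 : val (1 : 'I_r) = 1%N.
Proof. by rewrite /= modn_small. Qed.

Lemma val_ZpN1 : val (-1 : 'I_r) = n.+1.
Proof. by rewrite /= !modn_small. Qed.

Lemma Zp1_neqN1 : (1 : 'I_r) != -1.
Proof. by rewrite -val_eqE val_Zp1 val_ZpN1; lia. Qed.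

Lemma odd_ZpN (z : 'I_r) : z != 0 -> odd (- z) = ~~ odd z.
Proof.
move=> z_neq0; rewrite /= modn_small; last by move: z_neq0; rewrite -val_eqE /=; lia.
by rewrite oddB ?r_odd // ltnW.
Qed.

Definition block (z : 'I_r) : 'I_2 -> 'I_8 -> K :=
  if z == 0 then tab0 else if z == 1 then tab1 else if z == -1 then tabN1
  else if odd z then tab_id else fun k j => - tab_id k j.

Lemma block_inj z : injective (fun x : 'I_2 * 'I_8 => block z x.1 x.2).
Proof.
rewrite /block; do 3?case: ifP => _; try by apply: table_inj; vm_compute.
by case: odd; [|apply: (inj_comp oppr_inj)]; apply: table_inj; vm_compute.
Qed.

Lemma block_halves z k :
  \sum_(j < 4) block z k (lshift 4 j) + \sum_(j < 4) block (- z) k (rshift 4 j) = 0.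
Proof.
have [tab0_h tab1_h tabN1_h tab_id_h] := tables_halves k.
rewrite /block oppr_eq0 eqr_opp eqr_oppLR.
have [_|z_neq0] := eqVneq z 0; first exact: tab0_h.
have [->|z_neq1] := eqVneq z 1; first by rewrite (negPf Zp1_neqN1).
have [_|z_neqN1] := eqVneq z (-1); first exact: tabN1_h.
by rewrite odd_ZpN //; case: odd; rewrite /= sumrN tab_id_h ?addrN ?addNr.
Qed.

Lemma block_inord_mid x k j : (1 < x <= n)%N ->
  block (inord x) k j = if odd x then tab_id k j else - tab_id k j.
Proof.
case/andP=> x_gt1 x_le_n; rewrite /block -!val_eqE val_Zp1 val_ZpN1 /= inordK; last lia.
have [x_neq0 x_neq1 x_neqN1] : [/\ x != 0, x != 1 & x != n.+1]%N by split; apply/eqP; lia.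
by rewrite (negPf x_neq0) (negPf x_neq1) (negPf x_neqN1); case: odd.
Qed.

Lemma sum_block k j : \sum_(z : 'I_r) block z k j = 0.
Proof.
have n_odd : odd n by move: r_odd; rewrite /= negbK.
rewrite (eq_bigr (fun z : 'I_r => block (inord z) k j)) => [|z _]; last by rewrite inord_val.
rewrite -(big_mkord xpredT (fun x => block (inord x) k j)).
rewrite big_ltn // big_ltn // big_nat_recr //=.
rewrite (eq_big_nat _ _ (F2 := fun x => if odd x then tab_id k j else - tab_id k j)); last first.
  by move=> x; apply: block_inord_mid.
have -> : \sum_(2 <= x < n.+1) (if odd x then tab_id k j else - tab_id k j) = 0.
  have -> : n.+1 = (2 + (n./2).*2)%N by rewrite -{1}(odd_double_half n) n_odd.
  exact: sum_alternating.
rewrite add0r.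
have n_neq0 : (n == 0%N) = false by apply/eqP; lia.
rewrite /block -!val_eqE val_Zp1 val_ZpN1 /= !inordK //= eqSS n_neq0 eqxx.
by rewrite addrA tables_sum.
Qed.

End Blocks.

(* The join finZmodType was declared after the product instances. *)
HB.saturate prod.

Theorem lemma4p9 (r : nat) (hr3 : (3 <= r)%N) (hodd : odd r) :
  exists A : 'I_2 -> 'I_r -> 'I_8 -> Gam r, is_MRS A 0 0.
Proof.
case: r hr3 hodd => [|[|n]] // r_gt2 r_odd.
exists (fun k i j => Gam_of (@lift_array _ _ 4 _ (@block n) k i j)).
rewrite -(Gam_of0 n).
apply: is_MRS_morph; [exact: Gam_ofD | exact: Gam_of0 | exact: Gam_of_bij | ].
apply: (@is_MRS_lift _ _ 4).
- exact: block_inj.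
- by rewrite !card_prod !card_ord.
- exact: sum_Zp_odd.
- exact: sum_block.
- exact: block_halves.
Qed.
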